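(* Let $X\in\mathbb R^{T\times K}$ have full column rank $K<T$ and let $\Gamma\in\mathbb R^{T\times T}$ satisfy $\|\Gamma\|<1-c$ for a constant $c\in(0,1)$. Then: (i) the matrices $I_T-\Gamma$, $I_T-P\Gamma$, $X'(I_T-\Gamma)X$ and $I_T+A_\Gamma M$ are invertible, where $A_\Gamma=(I_T-\Gamma)^{-1}\Gamma$; (ii) the following identities hold: $(I_T-\Gamma)M_\Gamma=M(I_T+A_\Gamma M)^{-1}$; $P_\Gamma=(I_T-P\Gamma)^{-1}P(I_T-\Gamma)$; $M_\Gamma=(I_T-P\Gamma)^{-1}M$; and for every $y\in\mathbb R^T$, $(X'(I_T-\Gamma)X)^{-1}X'(I_T-\Gamma)y=(X'X)^{-1}X'(I_T+A_\Gamma M)^{-1}y$; (iii) the matrix $(I_T-\Gamma)M_\Gamma+M_\Gamma'(I_T-\Gamma')$ is positive semi-definite, and there are constants $0<c'<C'$ depending only on $c$ such that $c'<\frac{T-K_\Gamma}{T-K}<C'$, where $T-K_\Gamma:=\operatorname{tr}[(I_T-\Gamma)M_\Gamma]$.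
   Context: $\|\cdot\|$ is the operator norm. $P=X(X'X)^{-1}X'$, $M=I_T-P$, $P_\Gamma=X(X'(I_T-\Gamma)X)^{-1}X'(I_T-\Gamma)$, $M_\Gamma=I_T-P_\Gamma$. *)

From HB Require Import structures.
From mathcomp Require Import all_boot all_order all_algebra.
From mathcomp Require Import classical_sets reals.
Set Implicit Arguments. Unset Strict Implicit. Unset Printing Implicit Defensive.
Import Order.TTheory GRing.Theory Num.Theory.
Local Open Scope ring_scope.
Local Open Scope classical_set_scope.

Section Defs.
Variable R : realType.

Definition norm2 (n : nat) (v : 'cV[R]_n) : R :=
  Num.sqrt (\sum_(i < n) v i 0 ^+ 2).

Definition opnorm (m n : nat) (A : 'M[R]_(m, n)) : R :=
  sup [set r : R | exists v : 'cV[R]_n, v != 0 /\ r = norm2 (A *m v) / norm2 v].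

Definition projP (T K : nat) (X : 'M[R]_(T, K)) : 'M[R]_T :=
  X *m invmx (X^T *m X) *m X^T.

Definition annM (T K : nat) (X : 'M[R]_(T, K)) : 'M[R]_T :=
  1%:M - projP X.

Definition projPG (T K : nat) (X : 'M[R]_(T, K)) (G : 'M[R]_T) : 'M[R]_T :=
  X *m invmx (X^T *m (1%:M - G) *m X) *m X^T *m (1%:M - G).

Definition annMG (T K : nat) (X : 'M[R]_(T, K)) (G : 'M[R]_T) : 'M[R]_T :=
  1%:M - projPG X G.

Definition AG (T : nat) (G : 'M[R]_T) : 'M[R]_T :=
  invmx (1%:M - G) *m G.

Definition psd (T : nat) (S : 'M[R]_T) : Prop :=
  forall v : 'cV[R]_T, 0 <= (v^T *m S *m v) 0 0.

End Defs.

(* Write S = I - Gamma.  Cauchy-Schwarz gives |<v, Gamma v>| <= ||Gamma|| |v|^2, so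
   <v, S v> >= c |v|^2 and |S v| <= (2 - c) |v|; coercivity makes S and X'SX invertible.
   The identities come from one-sided inverses: (I - P Gamma)(M_Gamma + P_Gamma S^-1) and
   (S M_Gamma + P_Gamma)(I + A_Gamma M) both equal M + P = I.  For the trace, S M_Gamma lives in
   the range of M on both sides, so tr(S M_Gamma) = sum_i <u_i, S u_i> with u_i = M_Gamma m_i
   over the columns m_i of M, whose squared norms add up to tr M = T - K; each term lies between
   c |m_i|^2 and (2 - c)^2 / c |m_i|^2. *)

From HB Require Import structures.
From mathcomp Require Import all_boot all_order all_algebra.
From mathcomp Require Import classical_sets reals.
From mathcomp Require Import ring lra.
Set Implicit Arguments. Unset Strict Implicit. Unset Printing Implicit Defensive.
Import Order.TTheory GRing.Theory Num.Theory.
Local Open Scope ring_scope.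

Section Dot.
Variable R : realDomainType.

Definition dot (n : nat) (u v : 'cV[R]_n) : R := \sum_i u i 0 * v i 0.

Lemma dot_mx n (u v : 'cV[R]_n) : (u^T *m v) 0 0 = dot u v.
Proof. by rewrite mxE; apply: eq_bigr => i _; rewrite mxE. Qed.

Lemma dotC n (u v : 'cV[R]_n) : dot u v = dot v u.
Proof. by apply: eq_bigr => i _; rewrite mulrC. Qed.

Lemma dotDr n (u v w : 'cV[R]_n) : dot u (v + w) = dot u v + dot u w.
Proof. by rewrite /dot -big_split; apply: eq_bigr => i _; rewrite !mxE mulrDr. Qed.

Lemma dotDl n (u v w : 'cV[R]_n) : dot (v + w) u = dot v u + dot w u.
Proof. by rewrite dotC dotDr !(dotC u). Qed.

Lemma dotNr n (u v : 'cV[R]_n) : dot u (- v) = - dot u v.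
Proof. by rewrite /dot -sumrN; apply: eq_bigr => i _; rewrite !mxE mulrN. Qed.

Lemma dotBr n (u v w : 'cV[R]_n) : dot u (v - w) = dot u v - dot u w.
Proof. by rewrite dotDr dotNr. Qed.

Lemma dotBl n (u v w : 'cV[R]_n) : dot (v - w) u = dot v u - dot w u.
Proof. by rewrite dotC dotBr !(dotC u). Qed.

Lemma dot0r n (u : 'cV[R]_n) : dot u 0 = 0.
Proof. by rewrite /dot big1 // => i _; rewrite mxE mulr0. Qed.

Lemma dot_mulmx n m (A : 'M[R]_(n, m)) u v : dot u (A *m v) = dot (A^T *m u) v.
Proof. by rewrite -!dot_mx trmx_mul trmxK mulmxA. Qed.

Lemma dot_ge0 n (u : 'cV[R]_n) : 0 <= dot u u.
Proof. by apply: sumr_ge0 => i _; rewrite -expr2 sqr_ge0. Qed.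

Lemma dot_eq0 n (u : 'cV[R]_n) : dot u u = 0 -> u = 0.
Proof.
move=> u0; apply/matrixP => i j; rewrite (ord1 j) mxE.
have sq_ge0 (k : 'I_n) : true -> 0 <= u k 0 * u k 0 by rewrite -expr2 sqr_ge0.
have /eqP := psumr_eq0P sq_ge0 u0 (i := i) isT.
by rewrite mulf_eq0 orbb => /eqP.
Qed.

Lemma dot_cauchy_schwarz n (u v : 'cV[R]_n) :
  dot u v ^+ 2 <= dot u u * dot v v.
Proof.
have [uu0|uu_neq0] := eqVneq (dot u u) 0.
  by rewrite uu0 (dot_eq0 uu0) dotC dot0r expr0n mul0r.
have uu_gt0 : 0 < dot u u by rewrite lt_def uu_neq0 dot_ge0.
have := dot_ge0 (dot u u *: v - dot u v *: u).
have dotZl a (x y : 'cV[R]_n) : dot (a *: x) y = a * dot x y.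
  by rewrite /dot mulr_sumr; apply: eq_bigr => i _; rewrite !mxE mulrA.
rewrite !(dotBl, dotBr, dotZl) ![dot _ (_ *: _)]dotC !dotZl (dotC v u) => h.
rewrite -subr_ge0 -(pmulr_rge0 _ uu_gt0); move: h; congr (_ <= _); ring.
Qed.

End Dot.

Section Contraction.
Variables (R : realDomainType) (n : nat) (G : 'M[R]_n) (d : R).
Hypothesis d_ge0 : 0 <= d.
Hypothesis G_le : forall v, dot (G *m v) (G *m v) <= d ^+ 2 * dot v v.

Lemma normr_dot_mulmx_le v : `|dot v (G *m v)| <= d * dot v v.
Proof.
have := dot_cauchy_schwarz v (G *m v); have := G_le v.
have := dot_ge0 v; have := dot_ge0 (G *m v) => ? ? ? ?.
have ? : dot v (G *m v) ^+ 2 <= (d * dot v v) ^+ 2 by nra.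
by have ? := mulr_ge0 d_ge0 (dot_ge0 v); rewrite ler_norml; apply/andP; split; nra.
Qed.

Lemma contraction_coercive v : (1 - d) * dot v v <= dot v ((1%:M - G) *m v).
Proof.
rewrite mulmxBl mul1mx dotBr.
by have := normr_dot_mulmx_le v; rewrite ler_norml => /andP[]; lra.
Qed.

Lemma contraction_bounded v :
  dot ((1%:M - G) *m v) ((1%:M - G) *m v) <= (1 + d) ^+ 2 * dot v v.
Proof.
rewrite mulmxBl mul1mx !(dotBl, dotBr) (dotC (G *m v) v).
have := G_le v; have := normr_dot_mulmx_le v; rewrite ler_norml => /andP[? _]; nra.
Qed.

End Contraction.

Section OperatorNorm.
Variable R : realType.

Lemma norm2E n (v : 'cV[R]_n) : norm2 v = Num.sqrt (dot v v).
Proof. by rewrite /norm2; congr Num.sqrt; apply: eq_bigr => i _; rewrite expr2. Qed.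

Lemma norm2_gt0 n (v : 'cV[R]_n) : v != 0 -> 0 < norm2 v.
Proof.
move=> v_neq0; rewrite norm2E sqrtr_gt0 lt_def dot_ge0 andbT.
by apply: contra v_neq0 => /eqP/dot_eq0->.
Qed.

Lemma dot_mulmx_le_frobenius m n (A : 'M[R]_(m, n)) v :
  dot (A *m v) (A *m v) <= (\sum_i dot (row i A)^T (row i A)^T) * dot v v.
Proof.
rewrite mulr_suml; apply: ler_sum => i _.
have -> : (A *m v) i 0 = dot (row i A)^T v.
  by rewrite mxE; apply: eq_bigr => j _; rewrite !mxE.
by rewrite -expr2 dot_cauchy_schwarz.
Qed.

Lemma opnorm_sq_le m n (A : 'M[R]_(m, n)) d v :
  opnorm A < d -> dot (A *m v) (A *m v) <= d ^+ 2 * dot v v.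
Proof.
move=> A_lt_d; have [->|v_neq0] := eqVneq v 0; first by rewrite mulmx0 !dot0r mulr0.
pose ratio w := norm2 (A *m w) / norm2 w.
have ratio_le w : w != 0 -> ratio w <= Num.sqrt (\sum_i dot (row i A)^T (row i A)^T).
  move=> w_neq0; rewrite ler_pdivrMr ?norm2_gt0 // !norm2E -sqrtrM ?ler_sqrt.
  - exact: dot_mulmx_le_frobenius.
  - by rewrite mulr_ge0 ?dot_ge0 ?sumr_ge0 // => i _; rewrite dot_ge0.
  - by rewrite sumr_ge0 // => i _; rewrite dot_ge0.
have : ratio v <= opnorm A.
  apply: sup_upper_bound; last by exists v.
  split; first by exists (ratio v), v.
  by exists (Num.sqrt (\sum_i dot (row i A)^T (row i A)^T)) => _ [w [/ratio_le le ->]].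
move=> /le_lt_trans/(_ A_lt_d); rewrite ltr_pdivrMr ?norm2_gt0 // !norm2E => lt_d.
have Av_ge0 := sqrtr_ge0 (dot (A *m v) (A *m v)).
have := ler_pM Av_ge0 Av_ge0 (ltW lt_d) (ltW lt_d).
by rewrite -!expr2 exprMn !sqr_sqrtr ?dot_ge0.
Qed.

End OperatorNorm.

Section SymmetricIdempotent.
Variables (R : realFieldType) (n : nat) (E : 'M[R]_n).
Hypotheses (E_sym : E^T = E) (E_idem : E *m E = E).

Lemma dot_sym_idem_le w : dot (E *m w) (E *m w) <= dot w w.
Proof.
have EE' : E *m (1%:M - E) = 0 by rewrite mulmxBr mulmx1 E_idem subrr.
have -> : dot w w = dot (E *m w + (1%:M - E) *m w) (E *m w + (1%:M - E) *m w).
  by rewrite -mulmxDl addrC subrK mul1mx.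
have cross : dot (E *m w) ((1%:M - E) *m w) = 0.
  by rewrite dotC dot_mulmx E_sym mulmxA EE' mul0mx dotC dot0r.
rewrite !(dotDl, dotDr) cross (dotC _ (E *m w)) cross !addr0 add0r lerDl.
exact: dot_ge0.
Qed.

Lemma mxtrace_tr_mul_mul m (A : 'M[R]_(n, m)) (B : 'M[R]_n) :
  \tr (A^T *m B *m A) = \sum_i dot (col i A) (B *m col i A).
Proof.
apply: eq_bigr => i _; rewrite -dot_mx mulmxA !mxE.
apply: eq_bigr => k _; rewrite !mxE; congr (_ * _).
by apply: eq_bigr => j _; rewrite !mxE.
Qed.

Lemma sum_dot_col_sym_idem : \sum_i dot (col i E) (col i E) = \tr E.
Proof.
have -> : \tr E = \tr (E^T *m 1%:M *m E) by rewrite mulmx1 E_sym E_idem.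
by rewrite mxtrace_tr_mul_mul; apply: eq_bigr => i _; rewrite mul1mx.
Qed.

End SymmetricIdempotent.

Lemma quad_definite_unitmx (R : realFieldType) n m (S : 'M[R]_n) (X : 'M[R]_(n, m)) :
  (forall w, dot w (S *m w) = 0 -> w = 0) -> \rank X = m ->
  X^T *m S *m X \in unitmx.
Proof.
move=> S_def X_rank; rewrite -row_free_unit; apply/inj_row_free => v vN0.
have /S_def Xv0 : dot (X *m v^T) (S *m (X *m v^T)) = 0.
  by rewrite -dot_mx trmx_mul trmxK !mulmxA -2!(mulmxA v) vN0 mul0mx mxE.
have X_free : row_free X^T by rewrite /row_free mxrank_tr X_rank.
apply: (row_free_inj X_free); rewrite mul0mx -[v]trmxK -trmx_mul Xv0.
exact: trmx0.
Qed.

Section Projection.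
Variables (R : realType) (T K : nat) (X : 'M[R]_(T, K)).
Hypothesis X_rank : \rank X = K.

Lemma gram_unitmx : X^T *m X \in unitmx.
Proof.
rewrite -[X^T]mulmx1; apply: quad_definite_unitmx X_rank => w.
by rewrite mul1mx; apply: dot_eq0.
Qed.

Lemma annM_mulX : annM X *m X = 0.
Proof.
by rewrite mulmxBl mul1mx /projP -!mulmxA mulVmx ?gram_unitmx // mulmx1 subrr.
Qed.

Lemma trmx_annM : (annM X)^T = annM X.
Proof.
rewrite /annM /projP linearB /= trmx1 !trmx_mul trmx_inv trmx_mul trmxK.
by rewrite mulmxA.
Qed.

Lemma trX_mul_annM : X^T *m annM X = 0.
Proof. by rewrite -trmx_annM -trmx_mul annM_mulX trmx0. Qed.

Lemma annM_idem : annM X *m annM X = annM X.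
Proof.
by rewrite {1}/annM mulmxBl mul1mx /projP -!mulmxA trX_mul_annM !mulmx0 subr0.
Qed.

Lemma mxtrace_annM : \tr (annM X) = (T - K)%:R.
Proof.
rewrite /annM /projP linearB /= mxtrace1 -mulmxA mxtrace_mulC -mulmxA.
by rewrite mulVmx ?gram_unitmx // mxtrace1 natrB // -X_rank rank_leq_row.
Qed.

End Projection.

Section WeightedProjection.
Variables (R : realType) (T K : nat) (X : 'M[R]_(T, K)) (G : 'M[R]_T) (c : R).
Hypotheses (X_rank : \rank X = K) (c_gt0 : 0 < c).
Hypothesis subG_coercive : forall v, c * dot v v <= dot v ((1%:M - G) *m v).

Local Notation S := (1%:M - G).
Local Notation P := (projP X).
Local Notation M := (annM X).
Local Notation N := (X^T *m (1%:M - G) *m X).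
Local Notation PG := (projPG X G).
Local Notation MG := (annMG X G).
Local Notation W := (1%:M + AG G *m annM X).

Lemma subG_definite w : dot w (S *m w) = 0 -> w = 0.
Proof.
move=> wSw0; apply: dot_eq0; apply/eqP; rewrite eq_le dot_ge0 andbT.
by rewrite -(pmulr_rle0 _ c_gt0) -wSw0 subG_coercive.
Qed.

Lemma subG_unitmx : S \in unitmx.
Proof.
have := quad_definite_unitmx subG_definite (mxrank1 R T).
by rewrite trmx1 mul1mx mulmx1.
Qed.

Lemma gram_subG_unitmx : N \in unitmx.
Proof. exact: quad_definite_unitmx subG_definite X_rank. Qed.

Lemma trX_subG_annMG : X^T *m S *m MG = 0.
Proof.
rewrite /annMG /projPG mulmxBr mulmx1 !mulmxA.
by rewrite mulmxV ?gram_subG_unitmx // mul1mx subrr.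
Qed.

Lemma annMG_mulX : MG *m X = 0.
Proof.
rewrite mulmxBl mul1mx.
have -> : PG *m X = X *m (invmx N *m N) by rewrite /projPG !mulmxA.
by rewrite mulVmx ?gram_subG_unitmx // mulmx1 subrr.
Qed.

Lemma annM_mul_projPG : M *m PG = 0.
Proof. by rewrite /projPG !mulmxA annM_mulX // !mul0mx. Qed.

Lemma subPmulG_E : 1%:M - P *m G = M + P *m S.
Proof. by rewrite /annM mulmxBr mulmx1 addrA subrK. Qed.

Lemma subPmulG_mul_annMG : (1%:M - P *m G) *m MG = M.
Proof.
rewrite subPmulG_E mulmxDl {1}/annMG mulmxBr mulmx1 annM_mul_projPG subr0.
have -> : P *m S *m MG = X *m invmx (X^T *m X) *m (X^T *m S *m MG).
  by rewrite /projP !mulmxA.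
by rewrite trX_subG_annMG mulmx0 addr0.
Qed.

Lemma subPmulG_mul_projPG : (1%:M - P *m G) *m PG = P *m S.
Proof.
rewrite subPmulG_E mulmxDl annM_mul_projPG add0r.
have -> : P *m S *m PG = X *m invmx (X^T *m X) *m (N *m invmx N) *m X^T *m S.
  by rewrite /projP /projPG !mulmxA.
by rewrite mulmxV ?gram_subG_unitmx // mulmx1.
Qed.

Lemma subPmulG_unitmx : (1%:M - P *m G) \in unitmx.
Proof.
suff /mulmx1_unit[] : (1%:M - P *m G) *m (MG + PG *m invmx S) = 1%:M by [].
rewrite mulmxDr subPmulG_mul_annMG mulmxA subPmulG_mul_projPG.
by rewrite mulmxK ?subG_unitmx // /annM subrK.
Qed.

Lemma subG_mul_W : S *m W = S *m P + M.
Proof.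
rewrite mulmxDr mulmx1.
have -> : S *m (AG G *m M) = G *m M.
  by rewrite /AG !mulmxA mulmxV ?subG_unitmx // mul1mx.
rewrite /annM mulmxBr mulmx1 [S *m P]mulmxBl mul1mx addrA subrK.
by rewrite [RHS]addrC addrA subrK.
Qed.

Lemma trX_subG_mul_W : X^T *m S *m W = N *m invmx (X^T *m X) *m X^T.
Proof.
by rewrite -mulmxA subG_mul_W mulmxDr trX_mul_annM // addr0 /projP !mulmxA.
Qed.

Lemma projPG_mul_W : PG *m W = P.
Proof.
have -> : PG *m W = X *m invmx N *m (X^T *m S *m W) by rewrite /projPG !mulmxA.
by rewrite trX_subG_mul_W 2!mulmxA mulmxKV ?gram_subG_unitmx.
Qed.

Lemma subG_annMG_mul_W : S *m MG *m W = M.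
Proof.
rewrite /annMG mulmxBr mulmx1 mulmxBl -(mulmxA S PG) projPG_mul_W subG_mul_W.
by rewrite addrC addKr.
Qed.

Lemma W_unitmx : W \in unitmx.
Proof.
suff /mulmx1_unit[] : (S *m MG + PG) *m W = 1%:M by [].
by rewrite mulmxDl subG_annMG_mul_W projPG_mul_W /annM subrK.
Qed.

Lemma subG_annMG_E : S *m MG = M *m invmx W.
Proof. exact: canRL (mulmxK W_unitmx) subG_annMG_mul_W. Qed.

Lemma projPG_E : PG = invmx (1%:M - P *m G) *m P *m S.
Proof. by rewrite -mulmxA -subPmulG_mul_projPG mulKmx ?subPmulG_unitmx. Qed.

Lemma annMG_E : MG = invmx (1%:M - P *m G) *m M.
Proof. by rewrite -subPmulG_mul_annMG mulKmx ?subPmulG_unitmx. Qed.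

Lemma gls_coefE : invmx N *m X^T *m S = invmx (X^T *m X) *m X^T *m invmx W.
Proof.
apply: (canRL (mulmxK W_unitmx)).
have -> : invmx N *m X^T *m S *m W = invmx N *m (X^T *m S *m W) by rewrite !mulmxA.
by rewrite trX_subG_mul_W 2!mulmxA mulVmx ?gram_subG_unitmx // mul1mx.
Qed.

Lemma dot_subG_annMG v : dot v (S *m (MG *m v)) = dot (MG *m v) (S *m (MG *m v)).
Proof.
have -> : dot v = dot (MG *m v + PG *m v) by rewrite -mulmxDl subrK mul1mx.
rewrite dotDl.
have -> : PG *m v = X *m (invmx N *m X^T *m S *m v) by rewrite /projPG !mulmxA.
rewrite [dot (X *m _) _]dotC [dot _ (X *m _)]dot_mulmx !mulmxA trX_subG_annMG.
by rewrite mul0mx [dot 0 _]dotC dot0r addr0.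
Qed.

Lemma psd_subG_annMG : psd (S *m MG + MG^T *m (1%:M - G^T)).
Proof.
have -> : 1%:M - G^T = S^T by rewrite linearB /= trmx1.
move=> v; rewrite -trmx_mul -mulmxA dot_mx mulmxDl dotDr.
rewrite [X in _ + X]dot_mulmx trmxK [dot (_ *m v) v]dotC -mulmxA dot_subG_annMG.
have := subG_coercive (MG *m v); have := mulr_ge0 (ltW c_gt0) (dot_ge0 (MG *m v)).
lra.
Qed.

Lemma annM_mul_annMG : M *m MG = M.
Proof. by rewrite /annMG mulmxBr mulmx1 annM_mul_projPG subr0. Qed.

Lemma annMG_mul_annM : MG *m M = MG.
Proof.
by rewrite /annM /projP mulmxBr mulmx1 !mulmxA annMG_mulX !mul0mx subr0.
Qed.

Lemma annM_subG_annMG : M *m (S *m MG) = S *m MG.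
Proof.
rewrite /annM mulmxBl mul1mx.
have -> : P *m (S *m MG) = X *m invmx (X^T *m X) *m (X^T *m S *m MG).
  by rewrite /projP !mulmxA.
by rewrite trX_subG_annMG mulmx0 subr0.
Qed.

Lemma dot_annM_le_subG_annMG w :
  c * dot (M *m w) (M *m w) <= dot (MG *m w) (S *m (MG *m w)).
Proof.
have -> : M *m w = M *m (MG *m w) by rewrite mulmxA annM_mul_annMG.
apply: le_trans (subG_coercive _); rewrite ler_pM2l //.
by apply: dot_sym_idem_le; [exact: trmx_annM | exact: annM_idem].
Qed.

Lemma annM_mul_col i : M *m col i M = col i M.
Proof. by rewrite !colE mulmxA annM_idem. Qed.

Lemma mxtrace_subG_annME :
  \tr (S *m MG) = \sum_i dot (MG *m col i M) (S *m (MG *m col i M)).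
Proof.
have -> : S *m MG = M^T *m (S *m MG) *m M.
  by rewrite trmx_annM annM_subG_annMG -mulmxA annMG_mul_annM.
by rewrite mxtrace_tr_mul_mul; apply: eq_bigr => i _; rewrite -mulmxA dot_subG_annMG.
Qed.

Lemma mxtrace_subG_annMG_ge : c * (T - K)%:R <= \tr (S *m MG).
Proof.
rewrite mxtrace_subG_annME -(mxtrace_annM X_rank).
rewrite -(sum_dot_col_sym_idem (trmx_annM X) (annM_idem X_rank)) mulr_sumr.
apply: ler_sum => i _; rewrite -{1 2}annM_mul_col.
exact: dot_annM_le_subG_annMG.
Qed.

Variable b : R.
Hypothesis subG_bounded : forall v, dot (S *m v) (S *m v) <= b ^+ 2 * dot v v.

(* With [u = MG w]: [Su] lies in the range of [M], so [<u, Su> = <Mw, Su>], and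
   Cauchy-Schwarz together with coercivity gives [c <u, Su>^2 <= b^2 |Mw|^2 <u, Su>]. *)
Lemma dot_subG_annMG_le w :
  c * dot (MG *m w) (S *m (MG *m w)) <= b ^+ 2 * dot (M *m w) (M *m w).
Proof.
set u := MG *m w; set z := dot u (S *m u).
have Su_range : M *m (S *m u) = S *m u.
  by rewrite /u !mulmxA -(mulmxA M) annM_subG_annMG.
have z_eq : z = dot (M *m w) (S *m u).
  rewrite /z -{1}Su_range dot_mulmx trmx_annM // /u.
  by rewrite [M *m (MG *m w)]mulmxA annM_mul_annMG.
have cs := dot_cauchy_schwarz (M *m w) (S *m u); rewrite -z_eq in cs.
have := subG_bounded u; have := subG_coercive u; rewrite -/z.
have := dot_ge0 u; have := dot_ge0 (M *m w) => Mw_ge0 u_ge0 cz Sb.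
have z_ge0 : 0 <= z by apply: le_trans cz; rewrite mulr_ge0 // ltW.
have ab_ge0 : 0 <= b ^+ 2 * dot (M *m w) (M *m w) by rewrite mulr_ge0 ?sqr_ge0.
have : c * z ^+ 2 <= b ^+ 2 * dot (M *m w) (M *m w) * z.
  apply: le_trans (_ : c * (dot (M *m w) (M *m w) * (b ^+ 2 * dot u u)) <= _).
    by rewrite ler_pM2l // (le_trans cs) // ler_wpM2l.
  by have := ler_wpM2l ab_ge0 cz; nra.
move: ab_ge0; set a := b ^+ 2 * _; move: z_ge0 c_gt0; nra.
Qed.

Lemma mxtrace_subG_annMG_le : c * \tr (S *m MG) <= b ^+ 2 * (T - K)%:R.
Proof.
rewrite mxtrace_subG_annME -(mxtrace_annM X_rank).
rewrite -(sum_dot_col_sym_idem (trmx_annM X) (annM_idem X_rank)) !mulr_sumr.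
apply: ler_sum => i _; rewrite -{3 4}annM_mul_col.
exact: dot_subG_annMG_le.
Qed.

End WeightedProjection.

Theorem mainTheorem9 (R : realType) (c : R) (hc0 : 0 < c) (hc1 : c < 1) :
  exists c' C' : R, 0 < c' /\ c' < C' /\
  forall (T K : nat) (X : 'M[R]_(T, K)) (G : 'M[R]_T),
    (K < T)%N -> \rank X = K -> opnorm G < 1 - c ->
    [/\ (1%:M - G) \in unitmx,
        (1%:M - projP X *m G) \in unitmx,
        (X^T *m (1%:M - G) *m X) \in unitmx
      & (1%:M + AG G *m annM X) \in unitmx] /\
    [/\ (1%:M - G) *m annMG X G = annM X *m invmx (1%:M + AG G *m annM X),
        projPG X G = invmx (1%:M - projP X *m G) *m projP X *m (1%:M - G),
        annMG X G = invmx (1%:M - projP X *m G) *m annM X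
      & forall y : 'cV[R]_T,
          invmx (X^T *m (1%:M - G) *m X) *m X^T *m (1%:M - G) *m y =
          invmx (X^T *m X) *m X^T *m invmx (1%:M + AG G *m annM X) *m y] /\
    psd ((1%:M - G) *m annMG X G + (annMG X G)^T *m (1%:M - G^T)) /\
    c' < \tr ((1%:M - G) *m annMG X G) / (T - K)%:R /\
    \tr ((1%:M - G) *m annMG X G) / (T - K)%:R < C'.
Proof.
have c_lt2 : c < 2 by rewrite (lt_trans hc1) // ltr1n.
exists (c / 2), ((2 - c) ^+ 2 / c + 1); split; first by rewrite divr_gt0.
split.
  by rewrite (@lt_le_trans _ _ 1) ?ltr_pdivrMr // ?mul1r // lerDr divr_ge0 ?sqr_ge0 ?ltW.
move=> T K X G KT X_rank G_lt.
have G_le v := opnorm_sq_le v G_lt.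
have d_ge0 : 0 <= 1 - c by rewrite subr_ge0 ltW.
have coercive v : c * dot v v <= dot v ((1%:M - G) *m v).
  by have := contraction_coercive d_ge0 G_le v; rewrite opprB addrC subrK.
have bounded v : dot ((1%:M - G) *m v) ((1%:M - G) *m v) <= (2 - c) ^+ 2 * dot v v.
  by have := contraction_bounded d_ge0 G_le v; rewrite addrA -mulr2n.
split.
  split; [exact: subG_unitmx hc0 coercive | exact: subPmulG_unitmx X_rank hc0 coercive |
          exact: gram_subG_unitmx X_rank hc0 coercive | exact: W_unitmx X_rank hc0 coercive].
split.
  split; [exact: subG_annMG_E X_rank hc0 coercive | exact: projPG_E X_rank hc0 coercive |
          exact: annMG_E X_rank hc0 coercive |].
  by move=> y; rewrite (gls_coefE X_rank hc0 coercive).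
split; first exact: psd_subG_annMG X_rank hc0 coercive.
have TK_gt0 : 0 < (T - K)%:R :> R by rewrite ltr0n subn_gt0.
have tr_ge := mxtrace_subG_annMG_ge X_rank hc0 coercive.
have tr_le := mxtrace_subG_annMG_le X_rank hc0 coercive bounded.
split.
  by rewrite (@lt_le_trans _ _ c) ?ltr_pdivrMr ?ltr_pMr ?ltr1n // ler_pdivlMr.
rewrite (@le_lt_trans _ _ ((2 - c) ^+ 2 / c)) ?ltrDl // ler_pdivrMr // mulrAC.
by rewrite ler_pdivlMr // mulrC.
Qed.
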